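(* Let $X,Y$ be real Banach spaces and let $H$ be a closed subspace of $L(X,Y)$ with $X^*\otimes Y\subseteq H$ such that $H$ has octahedral norm. Assume that the norm of $Y$ is non-rough. Then $X^*$ has octahedral norm.
   Context: The norm of a Banach space $Z$ is octahedral if for every finite-dimensional subspace $E$ and $\varepsilon>0$ there is $y\in S_Z$ with $\|x+\lambda y\|\ge(1-\varepsilon)(\|x\|+|\lambda|)$ for all $x\in E$, scalars $\lambda$. For $u\in S_Z$, $\eta(Z,u)=\limsup_{\|h\|\to0}\frac{\|u+h\|+\|u-h\|-2}{\|h\|}$. $Z$ is $\varepsilon$-rough if $\eta(Z,u)\ge\varepsilon$ for every $u\in S_Z$; the norm is rough if $\varepsilon$-rough for some $\varepsilon>0$, non-rough otherwise. $X^*\otimes Y$ is the space of finite-rank operators spanned by $x\mapsto x^*(x)y$. *)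

From Stdlib Require Import Reals List ClassicalEpsilon.
Open Scope R_scope.

Record Banach := {
  car :> Type;
  bzero : car;
  badd : car -> car -> car;
  bopp : car -> car;
  bscal : R -> car -> car;
  bnorm : car -> R;
  badd_assoc : forall x y z, badd x (badd y z) = badd (badd x y) z;
  badd_comm : forall x y, badd x y = badd y x;
  badd_zero : forall x, badd x bzero = x;
  badd_opp : forall x, badd x (bopp x) = bzero;
  bscal_one : forall x, bscal 1 x = x;
  bscal_assoc : forall a b x, bscal a (bscal b x) = bscal (a * b) x;
  bscal_addr : forall a x y, bscal a (badd x y) = badd (bscal a x) (bscal a y);
  bscal_addl : forall a b x, bscal (a + b) x = badd (bscal a x) (bscal b x);
  bnorm_eq0 : forall x, bnorm x = 0 -> x = bzero;
  bnorm_scal : forall a x, bnorm (bscal a x) = Rabs a * bnorm x;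
  bnorm_triangle : forall x y, bnorm (badd x y) <= bnorm x + bnorm y;
  bcomplete : forall u : nat -> car,
    (forall eps, 0 < eps -> exists N, forall n m, (N <= n)%nat -> (N <= m)%nat ->
        bnorm (badd (u n) (bopp (u m))) < eps) ->
    exists l, forall eps, 0 < eps -> exists N, forall n, (N <= n)%nat ->
        bnorm (badd (u n) (bopp l)) < eps
}.
Arguments bzero {_}. Arguments badd {_}. Arguments bopp {_}.
Arguments bscal {_}. Arguments bnorm {_}.

(** Supremum / infimum of a set of reals (meaningful when it exists). *)
Definition Rsup (E : R -> Prop) : R :=
  epsilon (inhabits 0) (fun r => is_lub E r).
Definition Rinf (E : R -> Prop) : R := - Rsup (fun x => E (- x)).

Definition is_linear (X : Banach) {W : Type} (wadd : W -> W -> W)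
  (wscal : R -> W -> W) (T : X -> W) : Prop :=
  (forall x y, T (badd x y) = wadd (T x) (T y)) /\
  (forall a x, T (bscal a x) = wscal a (T x)).

Definition is_bounded_linear (X : Banach) {W : Type} (wadd : W -> W -> W)
  (wscal : R -> W -> W) (wnorm : W -> R) (T : X -> W) : Prop :=
  is_linear X wadd wscal T /\
  exists C, forall x, wnorm (T x) <= C * bnorm x.

Definition opnorm (X : Banach) {W : Type} (wnorm : W -> R) (T : X -> W) : R :=
  Rsup (fun t => exists x : X, bnorm x <= 1 /\ t = wnorm (T x)).

Definition BL (X Y : Banach) (T : X -> Y) : Prop :=
  is_bounded_linear X (@badd Y) (@bscal Y) (@bnorm Y) T.
Definition op_add {X Y : Banach} (S T : X -> Y) : X -> Y := fun x => badd (S x) (T x).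
Definition op_scal {X Y : Banach} (a : R) (T : X -> Y) : X -> Y := fun x => bscal a (T x).
Definition op_zero {X Y : Banach} : X -> Y := fun _ => bzero.
Definition op_norm {X Y : Banach} (T : X -> Y) : R := opnorm X (@bnorm Y) T.

Definition dual_mem (X : Banach) (f : X -> R) : Prop :=
  is_bounded_linear X Rplus Rmult Rabs f.
Definition fadd {X : Banach} (f g : X -> R) : X -> R := fun x => f x + g x.
Definition fscal {X : Banach} (a : R) (f : X -> R) : X -> R := fun x => a * f x.
Definition fzero {X : Banach} : X -> R := fun _ => 0.
Definition fnorm {X : Banach} (f : X -> R) : R := opnorm X Rabs f.

Definition closed_subspace_L (X Y : Banach) (H : (X -> Y) -> Prop) : Prop :=
  (forall T, H T -> BL X Y T) /\
  H op_zero /\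
  (forall S T, H S -> H T -> H (op_add S T)) /\
  (forall a T, H T -> H (op_scal a T)) /\
  (forall (u : nat -> X -> Y) (T : X -> Y), (forall n, H (u n)) -> BL X Y T ->
     (forall eps, 0 < eps -> exists N, forall n, (N <= n)%nat ->
        op_norm (op_add (u n) (op_scal (-1) T)) < eps) ->
     H T).

(** X^* (x) Y: finite sums of rank-one operators x |-> f(x) y. *)
Definition tensor_op {X Y : Banach} (l : list ((X -> R) * Y)) : X -> Y :=
  fun x => fold_right (fun p acc => badd (bscal (fst p x) (snd p)) acc) bzero l.

Definition tensor_in (X Y : Banach) (H : (X -> Y) -> Prop) : Prop :=
  forall l : list ((X -> R) * Y),
    Forall (fun p => dual_mem X (fst p)) l -> H (tensor_op l).

(** Octahedral norm of a normed space V (carrier restricted to the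
    subspace P), given by its operations.  A finite-dimensional subspace E
    of the space is the span of a finite list of its elements. *)
Definition lincomb {V : Type} (vadd : V -> V -> V) (vscal : R -> V -> V) (vzero : V)
  (c : list R) (l : list V) : V :=
  fold_right (fun p acc => vadd (vscal (fst p) (snd p)) acc) vzero (combine c l).

Definition octahedral {V : Type} (P : V -> Prop) (vadd : V -> V -> V)
  (vscal : R -> V -> V) (vzero : V) (vnorm : V -> R) : Prop :=
  forall (l : list V), Forall P l ->
  forall eps, 0 < eps ->
  exists y, P y /\ vnorm y = 1 /\
    forall (c : list R) (lam : R), length c = length l ->
      let x := lincomb vadd vscal vzero c l in
      vnorm (vadd x (vscal lam y)) >= (1 - eps) * (vnorm x + Rabs lam).

(** eta(Z,u) = limsup_{||h|| -> 0} (||u+h|| + ||u-h|| - 2) / ||h||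
           = inf_{delta>0} sup_{0<||h||<delta} (...). *)
Definition eta (Z : Banach) (u : Z) : R :=
  Rinf (fun s => exists delta, 0 < delta /\
    s = Rsup (fun t => exists h : Z, 0 < bnorm h < delta /\
      t = (bnorm (badd u h) + bnorm (badd u (bopp h)) - 2) / bnorm h)).

Definition eps_rough (Z : Banach) (e : R) : Prop :=
  forall u : Z, bnorm u = 1 -> eta Z u >= e.

Definition rough (Z : Banach) : Prop := exists e, 0 < e /\ eps_rough Z e.
Definition non_rough (Z : Banach) : Prop := ~ rough Z.

From Stdlib Require Import Reals List Lra ClassicalEpsilon Classical
  FunctionalExtensionality PropExtensionality.
From mathcomp Require classical_sets boolp.
Open Scope R_scope.

(* Since Y is not rough, it has a unit vector u at which the norm is nearly smooth;
   let phi be a norming functional of u (Hahn-Banach).  Given functionals f_1, ..., f_n,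
   apply octahedrality of H to the rank-one operators f_i (x) u, getting T in H of norm 1,
   and take g = phi o T.  For F in the span of the f_i, a point x almost norming
   F (x) u + lam T must have |F x| close to ||F||, and near-smoothness at u turns
   ||F x u + lam T x|| into |F x + lam g x| up to a small error: this is the octahedral
   inequality for F and g at the single scale lam = t ||F||, and convexity of
   lam |-> ||F + lam g|| extends it to every lam.  A nonzero functional f_0 added to the
   list forces ||g|| to be close to 1, so g can be normalized. *)

Arguments badd_assoc {_}. Arguments badd_comm {_}. Arguments badd_zero {_}.
Arguments badd_opp {_}. Arguments bscal_one {_}. Arguments bscal_assoc {_}.
Arguments bscal_addr {_}. Arguments bscal_addl {_}. Arguments bnorm_eq0 {_}.
Arguments bnorm_scal {_}. Arguments bnorm_triangle {_}.

Lemma Rabs_N1 : Rabs (-1) = 1.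
Proof. rewrite Rabs_left; lra. Qed.

Section BanachAlgebra.
Variable V : Banach.
Implicit Types x y z w : V.

Lemma badd0l x : badd bzero x = x.
Proof. rewrite badd_comm. apply badd_zero. Qed.

Lemma baddI x y z : badd x y = badd x z -> y = z.
Proof.
  intros E.
  assert (E' : badd (badd (bopp x) x) y = badd (badd (bopp x) x) z)
    by now rewrite <- !badd_assoc, E.
  now rewrite (badd_comm (bopp x)), badd_opp, !badd0l in E'.
Qed.

Lemma bscal0l x : bscal 0 x = bzero.
Proof.
  apply (baddI (bscal 0 x)). rewrite badd_zero, <- bscal_addl. now rewrite Rplus_0_l.
Qed.

Lemma bscal0r a : bscal a (@bzero V) = bzero.
Proof. now rewrite <- (bscal0l bzero), bscal_assoc, Rmult_0_r. Qed.

Lemma bopp_scal x : bopp x = bscal (-1) x.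
Proof.
  apply (baddI x). rewrite badd_opp. rewrite <- (bscal_one x) at 1.
  now rewrite <- bscal_addl, Rplus_opp_r, bscal0l.
Qed.

Lemma bnorm0 : bnorm (@bzero V) = 0.
Proof. now rewrite <- (bscal0l bzero), bnorm_scal, Rabs_R0, Rmult_0_l. Qed.

Lemma bnormN x : bnorm (bopp x) = bnorm x.
Proof. now rewrite bopp_scal, bnorm_scal, Rabs_N1, Rmult_1_l. Qed.

Lemma bnorm_ge0 x : 0 <= bnorm x.
Proof.
  pose proof (bnorm_triangle x (bopp x)) as Htri.
  rewrite badd_opp, bnorm0, bnormN in Htri. lra.
Qed.

Lemma baddACA x y z w : badd (badd x y) (badd z w) = badd (badd x z) (badd y w).
Proof.
  rewrite <- !badd_assoc. f_equal. rewrite !badd_assoc. f_equal. apply badd_comm.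
Qed.

End BanachAlgebra.

Lemma Rsup_is_lub (E : R -> Prop) :
  (exists x, E x) -> (exists M, forall x, E x -> x <= M) -> is_lub E (Rsup E).
Proof.
  intros [x Ex] [M HM]. unfold Rsup. apply epsilon_spec.
  destruct (completeness E) as [m Hm]; [exists M; exact HM | exists x; exact Ex |].
  now exists m.
Qed.

Lemma Rsup_ub (E : R -> Prop) x :
  (exists M, forall x, E x -> x <= M) -> E x -> x <= Rsup E.
Proof. intros HB Ex. now apply (Rsup_is_lub E (ex_intro _ x Ex) HB). Qed.

Lemma Rsup_le (E : R -> Prop) M :
  (exists x, E x) -> (forall x, E x -> x <= M) -> Rsup E <= M.
Proof. intros Hne HM. now apply (Rsup_is_lub E Hne (ex_intro _ M HM)). Qed.

Lemma Rsup_approx (E : R -> Prop) eps :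
  (exists x, E x) -> (exists M, forall x, E x -> x <= M) -> 0 < eps ->
  exists x, E x /\ Rsup E - eps < x.
Proof.
  intros Hne HB Heps. apply NNPP. intros Hno.
  enough (Rsup E <= Rsup E - eps) by lra.
  apply Rsup_le; [exact Hne |]. intros x Ex.
  apply Rnot_lt_le. intros Hlt. apply Hno. now exists x.
Qed.

Lemma Rinf_lb (E : R -> Prop) x :
  (exists m, forall x, E x -> m <= x) -> E x -> Rinf E <= x.
Proof.
  intros [m Hm] Ex. unfold Rinf.
  enough (- x <= Rsup (fun y => E (- y))) by lra.
  apply Rsup_ub; [| now rewrite Ropp_involutive].
  exists (- m). intros y Ey. specialize (Hm _ Ey). lra.
Qed.

Lemma Rinf_ge (E : R -> Prop) m :
  (exists x, E x) -> (forall x, E x -> m <= x) -> m <= Rinf E.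
Proof.
  intros [x Ex] Hm. unfold Rinf.
  enough (Rsup (fun y => E (- y)) <= - m) by lra.
  apply Rsup_le; [exists (- x); now rewrite Ropp_involutive |].
  intros y Ey. specialize (Hm _ Ey). lra.
Qed.

Lemma Rinf_approx (E : R -> Prop) eps :
  (exists x, E x) -> (exists m, forall x, E x -> m <= x) -> 0 < eps ->
  exists x, E x /\ x < Rinf E + eps.
Proof.
  intros Hne HB Heps. apply NNPP. intros Hno.
  enough (Rinf E + eps <= Rinf E) by lra.
  apply Rinf_ge; [exact Hne |]. intros x Ex.
  apply Rnot_lt_le. intros Hlt. apply Hno. now exists x.
Qed.

Section OperatorNorm.
Variables (X : Banach) (W : Type) (wnorm : W -> R) (T : X -> W).

Definition op_bounded : Prop :=
  exists M, forall x : X, bnorm x <= 1 -> wnorm (T x) <= M.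

Let ball_image_nonempty :
  exists t, exists x : X, bnorm x <= 1 /\ t = wnorm (T x).
Proof. exists (wnorm (T bzero)), bzero. split; [rewrite bnorm0; lra | reflexivity]. Qed.

Lemma opnorm_ub x : op_bounded -> bnorm x <= 1 -> wnorm (T x) <= opnorm X wnorm T.
Proof.
  intros [M HM] Hx. apply Rsup_ub; [| now exists x].
  exists M. intros t [y [Hy ->]]. auto.
Qed.

Lemma opnorm_le M :
  (forall x : X, bnorm x <= 1 -> wnorm (T x) <= M) -> opnorm X wnorm T <= M.
Proof.
  intros HM. apply Rsup_le; [exact ball_image_nonempty |].
  intros t [y [Hy ->]]. auto.
Qed.

Lemma opnorm_approx eps : op_bounded -> 0 < eps ->
  exists x, bnorm x <= 1 /\ opnorm X wnorm T - eps < wnorm (T x).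
Proof.
  intros [M HM] Heps.
  destruct (Rsup_approx _ eps ball_image_nonempty) as [t [[x [Hx ->]] Ht]];
    [| exact Heps | now exists x].
  exists M. intros t [y [Hy ->]]. auto.
Qed.

End OperatorNorm.

Section HahnBanach.
Variable Y : Banach.

Definition sublinear (q : Y -> R) : Prop :=
  (forall x y, q (badd x y) <= q x + q y) /\
  (forall a x, 0 < a -> q (bscal a x) <= a * q x) /\ q bzero = 0.

Lemma sublinear_scal q a x : sublinear q -> 0 <= a -> q (bscal a x) = a * q x.
Proof.
  intros [_ [Hscal H0]] Ha. destruct (Req_dec a 0) as [-> | Ha0].
  - now rewrite bscal0l, H0, Rmult_0_l.
  - apply Rle_antisym; [apply Hscal; lra |].
    assert (Hinv : q x <= / a * q (bscal a x)).
    { rewrite <- (bscal_one x) at 1. rewrite <- (Rinv_l a Ha0), <- bscal_assoc.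
      apply Hscal, Rinv_0_lt_compat. lra. }
    apply (Rmult_le_compat_l a) in Hinv; [| lra].
    now rewrite <- Rmult_assoc, Rinv_r, Rmult_1_l in Hinv.
Qed.

Lemma sublinear_lower q x : sublinear q -> - q (bopp x) <= q x.
Proof.
  intros [Hadd [_ H0]]. pose proof (Hadd x (bopp x)) as Hx.
  rewrite badd_opp, H0 in Hx. lra.
Qed.

Lemma sublinear_odd_linear q : sublinear q -> (forall x, q (bopp x) = - q x) ->
  (forall x y, q (badd x y) = q x + q y) /\ (forall a x, q (bscal a x) = a * q x).
Proof.
  intros Hq Hodd. split.
  - intros x y. apply Rle_antisym; [now apply Hq |].
    pose proof (proj1 Hq (bopp x) (bopp y)) as Hopp.
    replace (badd (bopp x) (bopp y)) with (bopp (badd x y)) in Hopp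
      by now rewrite !bopp_scal, bscal_addr.
    rewrite !Hodd in Hopp. lra.
  - intros a x. destruct (Rle_dec 0 a) as [Ha | Ha]; [now apply sublinear_scal |].
    replace (bscal a x) with (bscal (- a) (bopp x))
      by (rewrite bopp_scal, bscal_assoc; f_equal; ring).
    rewrite sublinear_scal, Hodd by (auto; lra). ring.
Qed.

(* The one-step extension of Hahn-Banach in disguise: since [shift q x0 (- x0) <= - q x0],
   a minimal sublinear [q] must be odd, hence linear. *)
Definition shift (q : Y -> R) (x0 y : Y) : R :=
  Rinf (fun r => exists t, 0 <= t /\ r = q (badd y (bscal t x0)) - t * q x0).

Section Shift.
Variables (q : Y -> R) (x0 : Y).
Hypothesis q_sublinear : sublinear q.

Let shift_term_lb y t : 0 <= t -> - q (bopp y) <= q (badd y (bscal t x0)) - t * q x0.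
Proof.
  intros Ht. pose proof (proj1 q_sublinear (badd y (bscal t x0)) (bopp y)) as Hadd.
  rewrite (badd_comm y), <- badd_assoc, badd_opp, badd_zero, badd_comm in Hadd.
  rewrite (sublinear_scal q t x0 q_sublinear Ht) in Hadd. lra.
Qed.

Let shift_set_lb y : exists m, forall r,
  (exists t, 0 <= t /\ r = q (badd y (bscal t x0)) - t * q x0) -> m <= r.
Proof. exists (- q (bopp y)). intros r [t [Ht ->]]. now apply shift_term_lb. Qed.

Let shift_set_ne y : exists r,
  exists t, 0 <= t /\ r = q (badd y (bscal t x0)) - t * q x0.
Proof. eexists. exists 0. split; [lra | reflexivity]. Qed.

Lemma shift_le_term y t : 0 <= t -> shift q x0 y <= q (badd y (bscal t x0)) - t * q x0.
Proof. intros Ht. apply Rinf_lb; [apply shift_set_lb | now exists t]. Qed.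

Lemma shift_le y : shift q x0 y <= q y.
Proof.
  pose proof (shift_le_term y 0 (Rle_refl 0)) as H0.
  rewrite bscal0l, badd_zero in H0. lra.
Qed.

Lemma shift_ge y : - q (bopp y) <= shift q x0 y.
Proof.
  apply Rinf_ge; [apply shift_set_ne |]. intros r [t [Ht ->]]. now apply shift_term_lb.
Qed.

Lemma shift_approx y eps : 0 < eps ->
  exists t, 0 <= t /\ q (badd y (bscal t x0)) - t * q x0 < shift q x0 y + eps.
Proof.
  intros Heps.
  destruct (Rinf_approx _ eps (shift_set_ne y) (shift_set_lb y) Heps)
    as [r [[t [Ht ->]] Hr]].
  now exists t.
Qed.

Lemma shift_sublinear : sublinear (shift q x0).
Proof.
  destruct q_sublinear as [Hadd [Hscal H0]]. split; [| split].
  - intros y z. apply Rle_plus_epsilon. intros eps Heps.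
    destruct (shift_approx y (eps / 2)) as [t1 [Ht1 Hy]]; [lra |].
    destruct (shift_approx z (eps / 2)) as [t2 [Ht2 Hz]]; [lra |].
    pose proof (shift_le_term (badd y z) (t1 + t2) ltac:(lra)) as Hyz.
    pose proof (Hadd (badd y (bscal t1 x0)) (badd z (bscal t2 x0))) as Htri.
    rewrite baddACA, <- bscal_addl in Htri. lra.
  - intros a y Ha. apply Rle_plus_epsilon. intros eps Heps.
    destruct (shift_approx y (eps / a)) as [t [Ht Hy]]; [apply Rdiv_lt_0_compat; lra |].
    pose proof (shift_le_term (bscal a y) (a * t) ltac:(nra)) as Hay.
    rewrite <- bscal_assoc, <- bscal_addr, (sublinear_scal q a) in Hay
      by (auto; lra).
    apply (Rmult_lt_compat_l a) in Hy; [| lra].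
    replace (a * (shift q x0 y + eps / a)) with (a * shift q x0 y + eps) in Hy
      by (field; lra).
    lra.
  - apply Rle_antisym; [pose proof (shift_le bzero); lra |].
    pose proof (shift_ge bzero) as Hge. rewrite bopp_scal, bscal0r, H0 in Hge. lra.
Qed.

Lemma shift_opp : shift q x0 (bopp x0) <= - q x0.
Proof.
  pose proof (shift_le_term (bopp x0) 1 ltac:(lra)) as H1.
  rewrite bscal_one, badd_comm, badd_opp, (proj2 (proj2 q_sublinear)) in H1. lra.
Qed.

End Shift.

Variable u : Y.
Hypothesis u_unit : bnorm u = 1.

Definition norming_candidate (q : Y -> R) : Prop :=
  sublinear q /\ (forall y, q y <= bnorm y) /\ q (bopp u) <= -1.

Lemma bnorm_sublinear : sublinear (@bnorm Y).
Proof.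
  split; [apply bnorm_triangle | split; [| apply bnorm0]].
  intros a x Ha. rewrite bnorm_scal, Rabs_pos_eq; lra.
Qed.

Lemma norming_candidate_shift q x0 :
  norming_candidate q -> norming_candidate (shift q x0).
Proof.
  intros [Hq [Hle Hu]]. split; [now apply shift_sublinear | split].
  - intros y. pose proof (shift_le q x0 Hq y). pose proof (Hle y). lra.
  - pose proof (shift_le q x0 Hq (bopp u)). lra.
Qed.

Lemma norming_candidate_shift_norm : norming_candidate (shift (@bnorm Y) u).
Proof.
  split; [apply shift_sublinear, bnorm_sublinear | split].
  - apply shift_le, bnorm_sublinear.
  - pose proof (shift_opp (@bnorm Y) u bnorm_sublinear). lra.
Qed.

Definition candidate := {q : Y -> R | norming_candidate q}.

Definition candidate_below (p q : candidate) : bool :=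
  boolp.asbool (forall y, proj1_sig q y <= proj1_sig p y).

Section ChainInfimum.
Variable A : candidate -> Prop.
Hypothesis A_total : classical_sets.total_on A (fun s t => is_true (candidate_below s t)).
Variable q0 : candidate.
Hypothesis A_q0 : A q0.

Let chain_values (y : Y) (r : R) : Prop := exists s, A s /\ r = proj1_sig s y.

Definition chain_inf (y : Y) : R := Rinf (chain_values y).

Let chain_values_ne y : exists r, chain_values y r.
Proof. eexists. now exists q0. Qed.

Let chain_values_lb y : exists m, forall r, chain_values y r -> m <= r.
Proof.
  exists (- bnorm (bopp y)). intros r [s [_ ->]]. destruct (proj2_sig s) as [Hq [Hle _]].
  pose proof (sublinear_lower _ y Hq). pose proof (Hle (bopp y)). lra.
Qed.

Lemma chain_inf_le s y : A s -> chain_inf y <= proj1_sig s y.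
Proof. intros As. apply Rinf_lb; [apply chain_values_lb | now exists s]. Qed.

Lemma chain_inf_approx y eps : 0 < eps ->
  exists s, A s /\ proj1_sig s y < chain_inf y + eps.
Proof.
  intros Heps.
  destruct (Rinf_approx _ eps (chain_values_ne y) (chain_values_lb y) Heps)
    as [r [[s [As ->]] Hr]].
  now exists s.
Qed.

Lemma chain_inf_subadditive y z :
  chain_inf (badd y z) <= chain_inf y + chain_inf z.
Proof.
  apply Rle_plus_epsilon. intros eps Heps.
  destruct (chain_inf_approx y (eps / 2)) as [s1 [As1 Hy]]; [lra |].
  destruct (chain_inf_approx z (eps / 2)) as [s2 [As2 Hz]]; [lra |].
  (* the lower of the two comparable candidates controls both [y] and [z] *)
  destruct (A_total s1 s2 As1 As2) as [H12 | H21];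
    apply boolp.asboolW in H12 || apply boolp.asboolW in H21.
  - pose proof (chain_inf_le s2 (badd y z) As2).
    pose proof (proj1 (proj1 (proj2_sig s2)) y z). pose proof (H12 y). lra.
  - pose proof (chain_inf_le s1 (badd y z) As1).
    pose proof (proj1 (proj1 (proj2_sig s1)) y z). pose proof (H21 z). lra.
Qed.

Lemma chain_inf_candidate : norming_candidate chain_inf.
Proof.
  split; [split; [apply chain_inf_subadditive | split] | split].
  - intros a y Ha. apply Rle_plus_epsilon. intros eps Heps.
    destruct (chain_inf_approx y (eps / a)) as [s [As Hy]]; [apply Rdiv_lt_0_compat; lra |].
    pose proof (chain_inf_le s (bscal a y) As).
    pose proof (proj1 (proj2 (proj1 (proj2_sig s))) a y Ha).
    apply (Rmult_lt_compat_l a) in Hy; [| lra].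
    replace (a * (chain_inf y + eps / a)) with (a * chain_inf y + eps) in Hy
      by (field; lra).
    lra.
  - apply Rle_antisym.
    + pose proof (chain_inf_le q0 bzero A_q0) as Hle.
      now rewrite (proj2 (proj2 (proj1 (proj2_sig q0)))) in Hle.
    + apply Rinf_ge; [apply chain_values_ne |]. intros r [s [_ ->]].
      now rewrite (proj2 (proj2 (proj1 (proj2_sig s)))); apply Rle_refl.
  - intros y. pose proof (chain_inf_le q0 y A_q0). pose proof (proj1 (proj2 (proj2_sig q0)) y).
    lra.
  - pose proof (chain_inf_le q0 (bopp u) A_q0). pose proof (proj2 (proj2 (proj2_sig q0))).
    lra.
Qed.

End ChainInfimum.

Lemma candidate_chain_lb (A : candidate -> Prop) :
  classical_sets.total_on A (fun s t => is_true (candidate_below s t)) ->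
  exists t, forall s, A s -> is_true (candidate_below s t).
Proof.
  intros Htot. destruct (classic (exists s, A s)) as [[q0 Aq0] | Hempty].
  - exists (exist _ _ (chain_inf_candidate A Htot q0 Aq0)). intros s As.
    apply boolp.asboolT. intros y. now apply chain_inf_le.
  - exists (exist _ _ norming_candidate_shift_norm). intros s As.
    exfalso. apply Hempty. now exists s.
Qed.

Lemma minimal_candidate : exists q, norming_candidate q /\
  forall p, norming_candidate p -> (forall y, p y <= q y) -> forall y, q y <= p y.
Proof.
  destruct (@classical_sets.ZL_preorder candidate
              (exist _ _ norming_candidate_shift_norm) candidate_below)
    as [[q Hq] Hmin].
  - intros t. apply boolp.asboolT. intros y. lra.
  - intros r s t Hrs Hst. apply boolp.asboolT. intros y.
    apply boolp.asboolW in Hrs. apply boolp.asboolW in Hst.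
    specialize (Hrs y). specialize (Hst y). lra.
  - exact candidate_chain_lb.
  - exists q. split; [exact Hq |]. intros p Hp Hpq.
    specialize (Hmin (exist _ p Hp) (boolp.asboolT Hpq)).
    exact (boolp.asboolW Hmin).
Qed.

End HahnBanach.

Definition norming_functional (Y : Banach) (u : Y) (phi : Y -> R) : Prop :=
  dual_mem Y phi /\ phi u = 1 /\ forall y, Rabs (phi y) <= bnorm y.

Lemma exists_norming_functional (Y : Banach) (u : Y) :
  bnorm u = 1 -> exists phi, norming_functional Y u phi.
Proof.
  intros Hu. destruct (minimal_candidate Y u Hu) as [q [[Hq [Hle Hqu]] Hmin]].
  assert (Hodd : forall x, q (bopp x) = - q x).
  { intros x0.
    assert (Hshift := Hmin _ (norming_candidate_shift Y u q x0 (conj Hq (conj Hle Hqu)))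
                        (shift_le Y q x0 Hq) (bopp x0)).
    pose proof (shift_opp Y q x0 Hq). pose proof (sublinear_lower Y q x0 Hq). lra. }
  destruct (sublinear_odd_linear Y q Hq Hodd) as [Hadd Hscal].
  assert (Hnorm : forall y, Rabs (q y) <= bnorm y).
  { intros y. apply Rabs_le. pose proof (Hle y). pose proof (Hle (bopp y)).
    rewrite Hodd, bnormN in *. lra. }
  exists q. split; [| split; [| exact Hnorm]].
  - split; [split; assumption |]. exists 1. intros y. rewrite Rmult_1_l. apply Hnorm.
  - rewrite Hodd in Hqu. pose proof (Hle u). lra.
Qed.

Lemma Rmult_le_Rabs (C r : R) : 0 <= r <= 1 -> C * r <= Rabs C.
Proof.
  intros Hr. destruct (Rle_dec 0 C).
  - rewrite Rabs_pos_eq by assumption. nra.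
  - rewrite Rabs_left by lra. nra.
Qed.

Section Dual.
Variable X : Banach.
Implicit Types (f g F G : X -> R) (l : list (X -> R)).

Lemma dual_bounded f : dual_mem X f -> op_bounded X R Rabs f.
Proof.
  intros [_ [C HC]]. exists (Rabs C). intros x Hx.
  eapply Rle_trans; [apply HC | apply Rmult_le_Rabs; split; [apply bnorm_ge0 | exact Hx]].
Qed.

Lemma dual_zero : dual_mem X fzero.
Proof.
  split; [split; intros; unfold fzero; ring |].
  exists 0. intros x. unfold fzero. rewrite Rabs_R0. lra.
Qed.

Lemma dual_add f g : dual_mem X f -> dual_mem X g -> dual_mem X (fadd f g).
Proof.
  intros [[Hf1 Hf2] [C1 H1]] [[Hg1 Hg2] [C2 H2]]. unfold fadd. split; [split |].
  - intros x y. rewrite Hf1, Hg1. ring.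
  - intros a x. rewrite Hf2, Hg2. ring.
  - exists (C1 + C2). intros x. eapply Rle_trans; [apply Rabs_triang |].
    pose proof (H1 x). pose proof (H2 x). lra.
Qed.

Lemma dual_scal a f : dual_mem X f -> dual_mem X (fscal a f).
Proof.
  intros [[Hf1 Hf2] [C HC]]. unfold fscal. split; [split |].
  - intros x y. rewrite Hf1. ring.
  - intros b x. rewrite Hf2. ring.
  - exists (Rabs a * C). intros x. rewrite Rabs_mult, Rmult_assoc.
    apply Rmult_le_compat_l; [apply Rabs_pos | apply HC].
Qed.

Lemma fnorm_ub f x : dual_mem X f -> bnorm x <= 1 -> Rabs (f x) <= fnorm f.
Proof. intros Hf. apply opnorm_ub, dual_bounded, Hf. Qed.

Lemma fnorm_le f M : (forall x : X, bnorm x <= 1 -> Rabs (f x) <= M) -> fnorm f <= M.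
Proof. apply opnorm_le. Qed.

Lemma fnorm_ge0 f : dual_mem X f -> 0 <= fnorm f.
Proof.
  intros Hf. eapply Rle_trans; [apply Rabs_pos |].
  apply (fnorm_ub f bzero Hf). rewrite bnorm0. lra.
Qed.

Lemma fnorm_add f g : dual_mem X f -> dual_mem X g -> fnorm (fadd f g) <= fnorm f + fnorm g.
Proof.
  intros Hf Hg. apply fnorm_le. intros x Hx. eapply Rle_trans; [apply Rabs_triang |].
  pose proof (fnorm_ub f x Hf Hx). pose proof (fnorm_ub g x Hg Hx). lra.
Qed.

Let fnorm_scal_le a f : dual_mem X f -> fnorm (fscal a f) <= Rabs a * fnorm f.
Proof.
  intros Hf. apply fnorm_le. intros x Hx. unfold fscal. rewrite Rabs_mult.
  apply Rmult_le_compat_l; [apply Rabs_pos | now apply fnorm_ub].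
Qed.

Lemma fnorm_scal a f : dual_mem X f -> fnorm (fscal a f) = Rabs a * fnorm f.
Proof.
  intros Hf. apply Rle_antisym; [now apply fnorm_scal_le |].
  destruct (Req_dec a 0) as [-> | Ha].
  - rewrite Rabs_R0, Rmult_0_l. now apply fnorm_ge0, dual_scal.
  - assert (Hback : f = fscal (/ a) (fscal a f)).
    { apply functional_extensionality. intros x. unfold fscal. now field. }
    pose proof (fnorm_scal_le (/ a) (fscal a f) (dual_scal a f Hf)) as Hle.
    rewrite <- Hback, Rabs_inv in Hle.
    assert (Hpos : 0 < Rabs a) by now apply Rabs_pos_lt.
    apply (Rmult_le_compat_l (Rabs a)) in Hle; [| lra].
    now rewrite <- Rmult_assoc, Rinv_r, Rmult_1_l in Hle by lra.
Qed.

Lemma fnorm_opp f : dual_mem X f -> fnorm (fscal (-1) f) = fnorm f.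
Proof. intros Hf. now rewrite fnorm_scal, Rabs_N1, Rmult_1_l. Qed.

Lemma dual_lincomb c l : Forall (dual_mem X) l -> dual_mem X (lincomb fadd fscal fzero c l).
Proof.
  revert c. induction l as [| f l IH]; intros [| a c] Hl; try apply dual_zero.
  inversion Hl; subst. apply dual_add; [now apply dual_scal | now apply IH].
Qed.

Lemma lincomb_nil_l l x : lincomb fadd fscal fzero nil l x = 0.
Proof. now destruct l. Qed.

Lemma lincomb_nil_r c x : lincomb (@fadd X) fscal fzero c nil x = 0.
Proof. now destruct c. Qed.

Lemma lincomb_cons a c f l x :
  lincomb fadd fscal fzero (a :: c) (f :: l) x = a * f x + lincomb fadd fscal fzero c l x.
Proof. reflexivity. Qed.

Definition in_span l F : Prop :=
  exists c, length c = length l /\ F = lincomb fadd fscal fzero c l.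

Lemma in_span_dual l F : Forall (dual_mem X) l -> in_span l F -> dual_mem X F.
Proof. intros Hl [c [_ ->]]. now apply dual_lincomb. Qed.

Lemma lincomb_map_opp c l x :
  lincomb fadd fscal fzero (map Ropp c) l x = - lincomb fadd fscal fzero c l x.
Proof.
  revert c. induction l as [| f l IH]; intros [| a c]; simpl map;
    rewrite ?lincomb_nil_l, ?lincomb_nil_r, ?lincomb_cons; try ring.
  rewrite IH. ring.
Qed.

Lemma in_span_opp l F : in_span l F -> in_span l (fscal (-1) F).
Proof.
  intros [c [Hc ->]]. exists (map Ropp c). rewrite length_map. split; [exact Hc |].
  apply functional_extensionality. intros x. rewrite lincomb_map_opp. unfold fscal. ring.
Qed.

Lemma in_span_cons f l F : in_span l F -> in_span (f :: l) F.
Proof.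
  intros [c [Hc ->]]. exists (0 :: c). split; [simpl; now rewrite Hc |].
  apply functional_extensionality. intros x. rewrite lincomb_cons. ring.
Qed.

Lemma in_span_head f l : in_span (f :: l) f.
Proof.
  exists (1 :: repeat 0 (length l)). split; [simpl; now rewrite repeat_length |].
  apply functional_extensionality. intros x. rewrite lincomb_cons.
  enough (Hzero : forall n l', lincomb fadd fscal fzero (repeat 0 n) l' x = 0)
    by (rewrite Hzero; ring).
  intros n. induction n as [| n IH]; intros [| g l'];
    rewrite ?lincomb_nil_l, ?lincomb_nil_r; try reflexivity.
  simpl repeat. rewrite lincomb_cons, IH. ring.
Qed.

End Dual.

Section OctahedralDual.
Variable X : Banach.
Implicit Types (f g F G : X -> R) (l : list (X -> R)).

(* [lam |-> fnorm (F + lam G)] is convex and 1-Lipschitz: beyond [lam0] use convexity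
   (F + lam0 G is a convex combination of F and F + lam G), below it the Lipschitz bound. *)
Lemma fnorm_add_scal_ge F G t0 e lam :
  dual_mem X F -> dual_mem X G -> fnorm G = 1 -> 0 < t0 <= 1 -> 0 < fnorm F -> 0 <= e ->
  fnorm (fadd F (fscal (t0 * fnorm F) G)) >= (1 + t0 - t0 * e) * fnorm F -> 0 <= lam ->
  fnorm (fadd F (fscal lam G)) >= (1 - e) * (fnorm F + lam).
Proof.
  intros HF HG HG1 Ht0 HN He Hlam0 Hlam.
  set (N := fnorm F) in *. set (lam0 := t0 * N) in *.
  assert (Hl0 : 0 < lam0) by (unfold lam0; nra).
  assert (HGl : dual_mem X (fadd F (fscal lam G))) by now apply dual_add, dual_scal.
  set (Z := fnorm (fadd F (fscal lam G))).
  destruct (Rle_dec lam0 lam) as [Hle | Hlt].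
  - set (al := lam0 / lam).
    assert (Hal : 0 < al <= 1).
    { unfold al. split; [apply Rdiv_lt_0_compat; lra |].
      apply Rmult_le_reg_r with lam; [lra |]. unfold Rdiv.
      rewrite Rmult_assoc, Rinv_l; lra. }
    assert (Hconv : fadd F (fscal lam0 G) = fadd (fscal (1 - al) F) (fscal al (fadd F (fscal lam G)))).
    { apply functional_extensionality. intros x. unfold fadd, fscal, al. field. lra. }
    pose proof (fnorm_add X _ _ (dual_scal X (1 - al) F HF) (dual_scal X al _ HGl)) as Htri.
    rewrite <- Hconv, !fnorm_scal, !Rabs_pos_eq in Htri by (auto; lra). fold Z in Htri.
    assert (Hlam_al : al * lam = lam0) by (unfold al; field; lra).
    assert (Hlam_ale : al * lam * e = lam0 * e) by now rewrite Hlam_al.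
    replace ((1 + t0 - t0 * e) * N) with (N + lam0 - lam0 * e) in Hlam0
      by (unfold lam0; ring).
    fold N in Htri. assert (Hscaled : al * (N + lam - lam * e) <= al * Z) by lra.
    apply Rmult_le_reg_l in Hscaled; [| lra].
    assert (0 <= e * N) by (apply Rmult_le_pos; lra).
    lra.
  - assert (Hlip : fadd F (fscal lam0 G) = fadd (fadd F (fscal lam G)) (fscal (lam0 - lam) G)).
    { apply functional_extensionality. intros x. unfold fadd, fscal. ring. }
    pose proof (fnorm_add X _ _ HGl (dual_scal X (lam0 - lam) G HG)) as Htri.
    rewrite <- Hlip, fnorm_scal, Rabs_pos_eq, HG1 in Htri by (auto; lra). fold Z in Htri.
    assert (lam0 * e <= N * e) by (unfold lam0; apply Rmult_le_compat_r; nra).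
    replace ((1 + t0 - t0 * e) * N) with (N + lam0 - lam0 * e) in Hlam0
      by (unfold lam0; ring).
    nra.
Qed.

Definition octahedral_at_scale l g t0 e : Prop :=
  forall F, in_span X l F -> 0 < fnorm F ->
    fnorm (fadd F (fscal (t0 * fnorm F) g)) >= (1 + t0 - t0 * e) * fnorm F.

Lemma octahedral_of_scale l g t0 e :
  Forall (dual_mem X) l -> dual_mem X g -> fnorm g = 1 -> 0 < t0 <= 1 -> 0 <= e ->
  octahedral_at_scale l g t0 e ->
  forall F lam, in_span X l F -> fnorm (fadd F (fscal lam g)) >= (1 - e) * (fnorm F + Rabs lam).
Proof.
  intros Hl Hg Hg1 Ht0 He Hscale F lam HFl.
  assert (HF : dual_mem X F) by now apply (in_span_dual X l).
  assert (HFg : dual_mem X (fadd F (fscal lam g))) by now apply dual_add, dual_scal.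
  destruct (Req_dec (fnorm F) 0) as [HN0 | HN0].
  - assert (Hsub : fscal lam g = fadd (fadd F (fscal lam g)) (fscal (-1) F)).
    { apply functional_extensionality. intros x. unfold fadd, fscal. ring. }
    pose proof (fnorm_add X _ _ HFg (dual_scal X (-1) F HF)) as Htri.
    rewrite <- Hsub, fnorm_scal, Hg1, fnorm_opp, HN0 in Htri by auto.
    rewrite HN0. pose proof (Rabs_pos lam). nra.
  - assert (HN : 0 < fnorm F) by (pose proof (fnorm_ge0 X F HF); lra).
    destruct (Rle_dec 0 lam) as [Hlam | Hlam].
    + rewrite Rabs_pos_eq by lra.
      apply (fnorm_add_scal_ge F g t0 e lam); auto.
    +       set (F' := fscal (-1) F).
      assert (HF' : dual_mem X F') by now apply dual_scal.
      assert (HN' : fnorm F' = fnorm F) by now apply fnorm_opp.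
      assert (Hneg : fadd F' (fscal (- lam) g) = fscal (-1) (fadd F (fscal lam g))).
      { apply functional_extensionality. intros x. unfold F', fadd, fscal. ring. }
      pose proof (fnorm_add_scal_ge F' g t0 e (- lam) HF' Hg Hg1 Ht0 ltac:(lra) He) as Hest.
      rewrite Hneg, fnorm_opp, HN' in Hest by auto.
      rewrite Rabs_left by lra. apply Hest; [| lra].
      rewrite <- HN'. apply Hscale; [now apply in_span_opp | lra].
Qed.

Lemma octahedral_at_scale_normalize f0 l g t0 d :
  Forall (dual_mem X) l -> dual_mem X f0 -> 0 < fnorm f0 -> dual_mem X g -> fnorm g <= 1 -> 0 < t0 -> d < 1 ->
  octahedral_at_scale (f0 :: l) g t0 d ->
  exists g', dual_mem X g' /\ fnorm g' = 1 /\ octahedral_at_scale l g' t0 (2 * d).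
Proof.
  intros Hl Hf0 Hf0n Hg Hg1 Ht0 Hd Hscale.
  set (gam := fnorm g) in *.
  assert (Hgam : 1 - d <= gam).
  { pose proof (Hscale f0 (in_span_head X f0 l) Hf0n) as Hf0est.
    pose proof (fnorm_add X _ _ Hf0 (dual_scal X (t0 * fnorm f0) g Hg)) as Htri.
    rewrite fnorm_scal, Rabs_pos_eq in Htri by (auto; nra). fold gam in Htri.
    apply Rmult_le_reg_l with (t0 * fnorm f0); nra. }
  set (g' := fscal (/ gam) g).
  assert (Hg' : dual_mem X g') by now apply dual_scal.
  assert (Hg'1 : fnorm g' = 1).
  { unfold g'. rewrite fnorm_scal, Rabs_pos_eq by (auto; apply Rlt_le, Rinv_0_lt_compat; lra).
    fold gam. field. lra. }
  exists g'. split; [exact Hg' | split; [exact Hg'1 |]].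
  intros F HFl HN.
  set (lam := t0 * fnorm F).
  assert (Hlam : 0 < lam) by (unfold lam; nra).
  assert (HF : dual_mem X F) by (apply (in_span_dual X (f0 :: l)); [now constructor | now apply in_span_cons]).
  pose proof (Hscale F (in_span_cons X f0 l F HFl) HN) as Hest. fold lam in Hest.
  assert (Hsplit : fadd F (fscal lam g) = fadd (fadd F (fscal lam g')) (fscal (lam * (gam - 1)) g')).
  { apply functional_extensionality. intros x. unfold g', fadd, fscal. field. lra. }
  pose proof (fnorm_add X _ _ (dual_add X _ _ HF (dual_scal X lam g' Hg')) (dual_scal X (lam * (gam - 1)) g' Hg'))
    as Htri.
  rewrite <- Hsplit, fnorm_scal, Hg'1, Rabs_mult, Rabs_pos_eq, Rabs_left1 in Htri by (auto; lra).
  assert (lam * - (gam - 1) <= lam * d) by (apply Rmult_le_compat_l; lra).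
  unfold lam in *. nra.
Qed.

End OctahedralDual.

Section Operators.
Variables X Y : Banach.

Lemma BL_bounded T : BL X Y T -> op_bounded X Y bnorm T.
Proof.
  intros [_ [C HC]]. exists (Rabs C). intros x Hx.
  eapply Rle_trans; [apply HC | apply Rmult_le_Rabs; split; [apply bnorm_ge0 | exact Hx]].
Qed.

Lemma BL_zero T : BL X Y T -> T bzero = bzero.
Proof. intros [[_ HT] _]. now rewrite <- (bscal0l X bzero), HT, bscal0l. Qed.

Lemma dual_comp T phi : BL X Y T -> dual_mem Y phi -> dual_mem X (fun x => phi (T x)).
Proof.
  intros [[HT1 HT2] [C HC]] [[Hphi1 Hphi2] [D HD]]. split; [split |].
  - intros x y. now rewrite HT1, Hphi1.
  - intros a x. now rewrite HT2, Hphi2.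
  - exists (Rabs D * C). intros x. eapply Rle_trans; [apply HD |].
    eapply Rle_trans; [apply Rmult_le_compat_r; [apply bnorm_ge0 | apply Rle_abs] |].
    rewrite Rmult_assoc. apply Rmult_le_compat_l; [apply Rabs_pos | apply HC].
Qed.

Definition rank_one (f : X -> R) (u : Y) : X -> Y := tensor_op ((f, u) :: nil).

Lemma lincomb_rank_one u c l x :
  lincomb op_add op_scal op_zero c (map (fun f => rank_one f u) l) x =
  bscal (lincomb fadd fscal fzero c l x) u.
Proof.
  revert c. induction l as [| f l IH]; intros [| a c];
    try (simpl; unfold op_zero; now rewrite bscal0l).
  change (badd (bscal a (badd (bscal (f x) u) bzero))
            (lincomb op_add op_scal op_zero c (map (fun f => rank_one f u) l) x)
          = bscal (a * f x + lincomb fadd fscal fzero c l x) u).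
  now rewrite IH, badd_zero, bscal_assoc, bscal_addl.
Qed.

Lemma op_norm_rank_one (S : X -> Y) F (u : Y) : bnorm u = 1 ->
  (forall x, S x = bscal (F x) u) -> op_norm S = fnorm F.
Proof.
  intros Hu HS. unfold op_norm, fnorm, opnorm. f_equal.
  apply functional_extensionality. intros t. apply propositional_extensionality.
  split; intros [x [Hx ->]]; exists x; split; auto; now rewrite HS, bnorm_scal, Hu, Rmult_1_r.
Qed.

Lemma dual_exists_nonzero T : BL X Y T -> op_norm T = 1 ->
  exists f, dual_mem X f /\ 0 < fnorm f.
Proof.
  intros HT HTn.
  destruct (opnorm_approx X Y bnorm T (1 / 2) (BL_bounded T HT) ltac:(lra)) as [x0 [Hx0 HTx0]].
  fold (op_norm T) in HTx0. rewrite HTn in HTx0.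
  assert (Hx0pos : 0 < bnorm x0).
  { destruct (Rle_lt_or_eq_dec 0 (bnorm x0) (bnorm_ge0 X x0)) as [Hpos | Hzero]; [exact Hpos |].
    apply eq_sym, bnorm_eq0 in Hzero. rewrite Hzero, BL_zero, bnorm0 in HTx0 by exact HT. lra. }
  set (u := bscal (/ bnorm x0) x0).
  assert (Hu : bnorm u = 1).
  { unfold u. rewrite bnorm_scal, Rabs_pos_eq by (apply Rlt_le, Rinv_0_lt_compat; lra).
    field. lra. }
  destruct (exists_norming_functional X u Hu) as [phi [Hphi [Hphiu _]]].
  exists phi. split; [exact Hphi |].
  pose proof (fnorm_ub X phi u Hphi ltac:(lra)) as Hub. rewrite Hphiu, Rabs_R1 in Hub. lra.
Qed.

End Operators.

Section NearlySmooth.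
Variable Y : Banach.

Definition rough_quotient (u h : Y) : R :=
  (bnorm (badd u h) + bnorm (badd u (bopp h)) - 2) / bnorm h.

Definition nearly_smooth (u : Y) (d delta : R) : Prop :=
  forall h, 0 < bnorm h < delta -> bnorm (badd u h) + bnorm (badd u (bopp h)) - 2 <= d * bnorm h.

Lemma rough_quotient_bounds u h : bnorm u = 1 -> 0 < bnorm h -> 0 <= rough_quotient u h <= 2.
Proof.
  intros Hu Hh. unfold rough_quotient.
  pose proof (bnorm_triangle u h). pose proof (bnorm_triangle u (bopp h)).
  pose proof (bnorm_triangle (badd u h) (badd u (bopp h))) as Hsum.
  rewrite bnormN in *.
  assert (Htwo : badd (badd u h) (badd u (bopp h)) = bscal 2 u).
  { rewrite baddACA, badd_opp, badd_zero.
    replace 2 with (1 + 1) by ring. now rewrite bscal_addl, bscal_one. }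
  rewrite Htwo, bnorm_scal, Hu, Rabs_pos_eq in Hsum by lra.
  split.
  - apply Rmult_le_pos; [lra | now apply Rlt_le, Rinv_0_lt_compat].
  - apply Rmult_le_reg_r with (bnorm h); [exact Hh |]. unfold Rdiv.
    rewrite Rmult_assoc, Rinv_l; lra.
Qed.

Lemma non_rough_nearly_smooth : non_rough Y -> forall d, 0 < d ->
  exists u, bnorm u = 1 /\ exists delta, 0 < delta /\ nearly_smooth u d delta.
Proof.
  intros Hnr d Hd.
  assert (Hu : exists u : Y, bnorm u = 1 /\ eta Y u < d).
  { apply NNPP. intros Hno. apply Hnr. exists d. split; [exact Hd |].
    intros u Hu. apply Rnot_lt_ge. intros Hlt. apply Hno. now exists u. }
  destruct Hu as [u [Hu Heta]]. exists u. split; [exact Hu |].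
  set (Q := fun delta t => exists h : Y, 0 < bnorm h < delta /\ t = rough_quotient u h).
  assert (Q_ne : forall delta, 0 < delta -> exists t, Q delta t).
  { intros delta Hdelta. eexists. exists (bscal (delta / 2) u). split; [| reflexivity].
    rewrite bnorm_scal, Hu, Rabs_pos_eq; lra. }
  assert (Q_ub : forall delta, exists M, forall t, Q delta t -> t <= M).
  { intros delta. exists 2. intros t [h [Hh ->]]. now apply rough_quotient_bounds. }
  set (E := fun s => exists delta, 0 < delta /\ s = Rsup (Q delta)).
  change (Rinf E < d) in Heta.
  assert (E_lb : exists m, forall s, E s -> m <= s).
  { exists 0. intros s [delta [Hdelta ->]]. destruct (Q_ne delta Hdelta) as [t Ht].
    apply Rle_trans with t; [| now apply Rsup_ub].
    destruct Ht as [h [Hh ->]]. now apply rough_quotient_bounds. }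
  destruct (Rinf_approx E (d - Rinf E)) as [s [[delta [Hdelta ->]] Hs]];
    [exists (Rsup (Q 1)), 1; split; [lra | reflexivity] | exact E_lb | lra |].
  exists delta. split; [exact Hdelta |]. intros h Hh.
  assert (Hq : rough_quotient u h <= d).
  { apply Rle_trans with (Rsup (Q delta)); [apply Rsup_ub; [apply Q_ub | now exists h] | lra]. }
  unfold rough_quotient in Hq. apply (Rmult_le_compat_r (bnorm h)) in Hq; [| lra].
  unfold Rdiv in Hq. rewrite Rmult_assoc, Rinv_l in Hq; lra.
Qed.

Variables (u : Y) (phi : Y -> R) (d delta : R).
Hypothesis u_unit : bnorm u = 1.
Hypothesis phi_norming : norming_functional Y u phi.
Hypothesis d_ge0 : 0 <= d.
Hypothesis u_smooth : nearly_smooth u d delta.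

Lemma nearly_smooth_norm_le h : bnorm h < delta -> bnorm (badd u h) <= 1 + phi h + d * bnorm h.
Proof.
  destruct phi_norming as [[[Hadd Hscal] _] [Hphiu Hphi]]. intros Hh.
  destruct (Rle_lt_or_eq_dec 0 (bnorm h) (bnorm_ge0 Y h)) as [Hpos | Hzero].
  - pose proof (u_smooth h (conj Hpos Hh)) as Hs.
    assert (Hsub : phi (badd u (bopp h)) = 1 - phi h)
      by (rewrite Hadd, bopp_scal, Hscal, Hphiu; ring).
    pose proof (Hphi (badd u (bopp h))) as Hlow. rewrite Hsub in Hlow.
    pose proof (Rle_abs (1 - phi h)). lra.
  - apply eq_sym, bnorm_eq0 in Hzero. subst h.
    rewrite badd_zero, u_unit, bnorm0, <- (bscal0l Y bzero), Hscal. lra.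
Qed.

Let nearly_smooth_estimate_pos a lam v : 0 < a -> 0 <= lam -> lam < delta * a ->
  bnorm v <= 1 -> bnorm (badd (bscal a u) (bscal lam v)) <= a + lam * phi v + lam * d.
Proof.
  intros Ha Hlam Hlt Hv. destruct phi_norming as [[[_ Hscal] _] _].
  set (s := lam / a).
  assert (Hs : 0 <= s) by (apply Rmult_le_pos; [lra | now apply Rlt_le, Rinv_0_lt_compat]).
  assert (Hsa : lam = a * s) by (unfold s; field; lra).
  assert (Hsdelta : s < delta) by (apply Rmult_lt_reg_l with a; lra).
  assert (Hh : bnorm (bscal s v) <= s) by (rewrite bnorm_scal, Rabs_pos_eq; nra).
  pose proof (nearly_smooth_norm_le (bscal s v) ltac:(lra)) as Hle.
  replace (badd (bscal a u) (bscal lam v)) with (bscal a (badd u (bscal s v)))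
    by now rewrite bscal_addr, bscal_assoc, <- Hsa.
  rewrite bnorm_scal, Rabs_pos_eq by lra. rewrite Hscal in Hle.
  assert (d * bnorm (bscal s v) <= d * s) by (apply Rmult_le_compat_l; lra).
  assert (Hle' : bnorm (badd u (bscal s v)) <= 1 + s * phi v + d * s) by lra.
  apply (Rmult_le_compat_l a) in Hle'; [| lra]. rewrite Hsa. lra.
Qed.

Lemma nearly_smooth_estimate a lam v : a <> 0 -> 0 <= lam -> lam < delta * Rabs a ->
  bnorm v <= 1 -> bnorm (badd (bscal a u) (bscal lam v)) <= Rabs (a + lam * phi v) + lam * d.
Proof.
  intros Ha Hlam Hlt Hv. destruct phi_norming as [[[_ Hscal] _] _].
  destruct (Rle_dec 0 a) as [Hpos | Hneg].
  - rewrite Rabs_pos_eq in Hlt by lra.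
    pose proof (nearly_smooth_estimate_pos a lam v ltac:(lra) Hlam Hlt Hv).
    pose proof (Rle_abs (a + lam * phi v)). lra.
  - rewrite Rabs_left in Hlt by lra.
    pose proof (nearly_smooth_estimate_pos (- a) lam (bopp v) ltac:(lra) Hlam Hlt
                  ltac:(now rewrite bnormN)) as Hest.
    replace (badd (bscal (- a) u) (bscal lam (bopp v)))
      with (bopp (badd (bscal a u) (bscal lam v))) in Hest
      by (rewrite !bopp_scal, bscal_addr, !bscal_assoc; f_equal; f_equal; ring).
    rewrite bnormN, bopp_scal, Hscal in Hest.
    pose proof (Rle_abs (- (a + lam * phi v))). rewrite Rabs_Ropp in *. lra.
Qed.

End NearlySmooth.

Section Transfer.
Variables (X Y : Banach) (u : Y) (phi : Y -> R) (d delta : R).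
Hypothesis u_unit : bnorm u = 1.
Hypothesis phi_norming : norming_functional Y u phi.
Hypothesis d_ge0 : 0 <= d.
Hypothesis u_smooth : nearly_smooth Y u d delta.

Lemma rank_one_perturbation_ge (S T : X -> Y) F lam e :
  dual_mem X F -> (forall x, S x = bscal (F x) u) -> BL X Y T -> op_norm T = 1 ->
  0 < e <= 1 / 6 -> 0 < lam <= fnorm F / 2 -> 2 * lam < delta * fnorm F ->
  op_norm (op_add S (op_scal lam T)) >= (1 - e) * (op_norm S + Rabs lam) ->
  fnorm (fadd F (fscal lam (fun x => phi (T x)))) >= fnorm F + lam - 3 * e * fnorm F - lam * d.
Proof.
  intros HF HS HT HTn He Hlam Hdelta Hoct.
  rewrite (op_norm_rank_one X Y S F u u_unit HS), Rabs_pos_eq in Hoct by lra.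
  set (N := fnorm F) in *. set (W := op_add S (op_scal lam T)) in *.
  assert (HW : op_bounded X Y bnorm W).
  { destruct (dual_bounded X F HF) as [MF HMF]. destruct (BL_bounded X Y T HT) as [MT HMT].
    exists (MF + lam * MT). intros x Hx. unfold W, op_add, op_scal. rewrite HS.
    eapply Rle_trans; [apply bnorm_triangle |].
    rewrite !bnorm_scal, u_unit, Rmult_1_r, (Rabs_pos_eq lam) by lra.
    pose proof (HMF x Hx). pose proof (HMT x Hx). nra. }
  (* [x] almost norms [W]; then [a = F x] must carry almost all of that norm. *)
  destruct (opnorm_approx X Y bnorm W (e * N) HW ltac:(nra)) as [x [Hx HWx]].
  fold (op_norm W) in HWx.
  set (a := F x). set (v := T x).
  assert (Ha : Rabs a <= N) by now apply fnorm_ub.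
  assert (Hv : bnorm v <= 1)
    by (rewrite <- HTn; now apply (opnorm_ub X Y bnorm T x (BL_bounded X Y T HT))).
  assert (HWxv : W x = badd (bscal a u) (bscal lam v))
    by (unfold W, op_add, op_scal; now rewrite HS).
  rewrite HWxv in HWx.
  assert (Hup : bnorm (badd (bscal a u) (bscal lam v)) <= Rabs a + lam).
  { eapply Rle_trans; [apply bnorm_triangle |].
    rewrite !bnorm_scal, u_unit, (Rabs_pos_eq lam) by lra. nra. }
  assert (e * lam <= e * (N / 2)) by (apply Rmult_le_compat_l; lra).
  assert (e * N <= 1 / 6 * N) by (apply Rmult_le_compat_r; lra).
  assert (Ha_large : N / 2 <= Rabs a) by lra.
  assert (Hest : bnorm (badd (bscal a u) (bscal lam v)) <= Rabs (a + lam * phi v) + lam * d).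
  { assert (Hdelta0 : 0 < delta) by (assert (0 < delta * N) by lra; nra).
    assert (delta * N <= delta * (2 * Rabs a)) by (apply Rmult_le_compat_l; lra).
    apply (nearly_smooth_estimate Y u phi d delta); auto; [| lra | lra].
    intros Ha0. rewrite Ha0, Rabs_R0 in Ha_large. lra. }
  assert (Hg : dual_mem X (fadd F (fscal lam (fun x => phi (T x)))))
    by (apply dual_add, dual_scal, dual_comp; auto; apply phi_norming).
  pose proof (fnorm_ub X _ x Hg Hx) as Hval.
  change (Rabs (a + lam * phi v) <= fnorm (fadd F (fscal lam (fun x => phi (T x))))) in Hval.
  lra.
Qed.

Lemma exists_octahedral_at_scale (H : (X -> Y) -> Prop) l :
  (forall T, H T -> BL X Y T) -> tensor_in X Y H ->
  octahedral H (@op_add X Y) (@op_scal X Y) (@op_zero X Y) (@op_norm X Y) ->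
  Forall (dual_mem X) l -> 0 < d -> 0 < delta ->
  exists g t0, dual_mem X g /\ fnorm g <= 1 /\ 0 < t0 <= 1 /\
    octahedral_at_scale X l g t0 (2 * d).
Proof.
  intros HBL Htin Hoct Hl Hd Hdelta.
  set (t0 := Rmin (1 / 2) (delta / 4)).
  assert (Ht0 : 0 < t0 <= 1 / 2 /\ t0 <= delta / 4).
  { unfold t0. repeat split; [apply Rmin_glb_lt; lra | apply Rmin_l | apply Rmin_r]. }
  set (e := Rmin (1 / 6) (t0 * d / 3)).
  assert (He : 0 < e <= 1 / 6 /\ e <= t0 * d / 3).
  { unfold e. repeat split; [apply Rmin_glb_lt; nra | apply Rmin_l | apply Rmin_r]. }
  set (L := map (fun f => rank_one X Y f u) l).
  assert (HL : Forall H L).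
  { apply Forall_map. eapply Forall_impl; [| exact Hl].
    intros f Hf. apply Htin. constructor; [exact Hf | constructor]. }
  destruct (Hoct L HL e ltac:(lra)) as [T [HT [HTn HToct]]].
  assert (HTB : BL X Y T) by now apply HBL.
  exists (fun x => phi (T x)), t0.
  split; [apply dual_comp; [exact HTB | apply phi_norming] |].
  split.
  { apply fnorm_le. intros x Hx. eapply Rle_trans; [apply phi_norming |].
    rewrite <- HTn. now apply (opnorm_ub X Y bnorm T x (BL_bounded X Y T HTB)). }
  split; [lra |].
  intros F [c [Hc ->]] HN.
  set (N := fnorm (lincomb fadd fscal fzero c l)) in *.
  assert (Hlam : 0 < t0 * N <= N / 2) by (split; nra).
  assert (Hlam_delta : 2 * (t0 * N) < delta * N).
  { assert (0 < (delta - 2 * t0) * N) by (apply Rmult_lt_0_compat; lra). lra. }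
  assert (HcL : length c = length L) by (unfold L; now rewrite length_map).
  pose proof (rank_one_perturbation_ge (lincomb op_add op_scal op_zero c L) T
                (lincomb fadd fscal fzero c l) (t0 * N) e (dual_lincomb X c l Hl)
                (lincomb_rank_one X Y u c l) HTB HTn ltac:(lra) Hlam Hlam_delta
                (HToct c (t0 * N) HcL)) as Hest.
  fold N in Hest.
  assert (3 * e * N <= t0 * d * N) by (apply Rmult_le_compat_r; lra).
  lra.
Qed.

End Transfer.

Theorem mainTheorem13 (X Y : Banach) (H : (X -> Y) -> Prop) :
  closed_subspace_L X Y H ->
  tensor_in X Y H ->
  octahedral H (@op_add X Y) (@op_scal X Y) (@op_zero X Y) (@op_norm X Y) ->
  non_rough Y ->
  octahedral (dual_mem X) (@fadd X) (@fscal X) (@fzero X) (@fnorm X).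
Proof.
  intros [HBL _] Htin Hoct Hnr l Hl eps Heps.
  set (e := Rmin eps 1).
  assert (He : 0 < e <= 1 /\ e <= eps).
  { unfold e. repeat split; [apply Rmin_glb_lt; lra | apply Rmin_r | apply Rmin_l]. }
  destruct (Hoct nil (Forall_nil _) 1 Rlt_0_1) as [T0 [HT0 [HT0n _]]].
  destruct (dual_exists_nonzero X Y T0 (HBL T0 HT0) HT0n) as [f0 [Hf0 Hf0n]].
  destruct (non_rough_nearly_smooth Y Hnr (e / 4)) as [u [Hu [delta [Hdelta Hsmooth]]]];
    [lra |].
  destruct (exists_norming_functional Y u Hu) as [phi Hphi].
  destruct (exists_octahedral_at_scale X Y u phi (e / 4) delta Hu Hphi ltac:(lra) Hsmooth
              H (f0 :: l) HBL Htin Hoct ltac:(now constructor) ltac:(lra) Hdelta)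
    as [g [t0 [Hg [Hg1 [Ht0 Hscale]]]]].
  destruct (octahedral_at_scale_normalize X f0 l g t0 (2 * (e / 4)) Hl Hf0 Hf0n Hg Hg1
              ltac:(lra) ltac:(lra) Hscale) as [g' [Hg' [Hg'1 Hscale']]].
  exists g'. split; [exact Hg' | split; [exact Hg'1 |]].
  intros c lam Hc. cbv zeta.
  set (F := lincomb fadd fscal fzero c l).
  assert (HF : in_span X l F) by now exists c.
  pose proof (octahedral_of_scale X l g' t0 (2 * (2 * (e / 4))) Hl Hg' Hg'1 Ht0 ltac:(lra)
                Hscale' F lam HF) as Hest.
  assert (0 <= fnorm F + Rabs lam)
    by (pose proof (fnorm_ge0 X F (in_span_dual X l F Hl HF)); pose proof (Rabs_pos lam); lra).
  assert ((1 - eps) * (fnorm F + Rabs lam) <= (1 - 2 * (2 * (e / 4))) * (fnorm F + Rabs lam))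
    by (apply Rmult_le_compat_r; lra).
  lra.
Qed.
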